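(* Let $L$ be a linear order with a first element such that $L/\!\sim_\omega\;\cong 1$ and $\operatorname{cf}(L)=\omega_1$. Then $L$ is isomorphic to a suborder of $U$.
   Context: The countable condensation $\sim_\omega$ on a linear order $L$: $x\sim_\omega y$ iff the closed interval between $x$ and $y$ is countable; $L/\!\sim_\omega\;\cong 1$ means all elements of $L$ are mutually $\sim_\omega$-equivalent. $\operatorname{cf}(L)$ is the least length of a strictly increasing cofinal sequence in $L$. $U$ is the linear order $R^*+\mathbb{Q}+R$, where $R$ is obtained from $\omega_1$ by replacing each $\alpha<\omega_1$ with a point $u_\alpha$ followed by a copy of the rationals, $R^*$ is the reverse of $R$, and the middle summand is a copy of the rationals. *)

From HB Require Import structures.
From mathcomp Require Import all_boot all_order all_algebra.
From mathcomp Require Import boolp classical_sets cardinality.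
Set Implicit Arguments. Unset Strict Implicit. Unset Printing Implicit Defensive.
Import Order.TTheory GRing.Theory Num.Theory.
Local Open Scope classical_set_scope.
Local Open Scope order_scope.

(* (W, wlt) is (an isomorphic copy of) omega_1: a well-ordered strict total
   order which is uncountable and all of whose proper initial segments are
   countable. *)
Record is_omega1 (W : Type) (wlt : W -> W -> Prop) : Prop := {
  w1_irrefl : forall a, ~ wlt a a;
  w1_trans  : forall a b c, wlt a b -> wlt b c -> wlt a c;
  w1_total  : forall a b, wlt a b \/ a = b \/ wlt b a;
  w1_wf     : well_founded wlt;
  w1_uncountable : ~ countable [set: W];
  w1_segments_countable : forall g : W, countable [set b | wlt b g]
}.

Section LinOrd.
Context {d : Order.disp_t} {L : orderType d}.

Definition has_first_element : Prop := exists m : L, forall x : L, m <= x.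

Definition sim_omega (x y : L) : Prop :=
  countable [set z : L | (Order.min x y <= z) && (z <= Order.max x y)].

(* L / ~_omega is the one-point order: all elements mutually equivalent *)
Definition cond_omega_trivial : Prop := forall x y : L, sim_omega x y.

Definition incr_cofinal (I : Type) (ilt : I -> I -> Prop) (f : I -> L) : Prop :=
  (forall i j, ilt i j -> f i < f j) /\ (forall x : L, exists i, x <= f i).

(* cf(L) = omega_1, where (W, wlt) is omega_1: there is a strictly increasing
   cofinal sequence of length omega_1 and none of any countable ordinal length
   (the countable ordinals being exactly the proper initial segments of W). *)
Definition cf_is_omega1 (W : Type) (wlt : W -> W -> Prop) : Prop :=
  (exists f : W -> L, incr_cofinal wlt f) /\
  (forall g : W, ~ exists f : {b : W | wlt b g} -> L,
       incr_cofinal (fun i j => wlt (proj1_sig i) (proj1_sig j)) f).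

End LinOrd.

(* R: each alpha < omega_1 replaced by a point u_alpha (None) followed by a
   copy of the rationals (Some q).  Lexicographic order. *)
Definition R_lt (W : Type) (wlt : W -> W -> Prop)
  (p q : W * option rat) : Prop :=
  wlt p.1 q.1 \/
  (p.1 = q.1 /\ match p.2, q.2 with
                | None, Some _ => True
                | Some a, Some b => (a < b)%R
                | _, _ => False
                end).

Inductive Upt (W : Type) : Type :=
  | UL of W & option rat   (* element of R^* (reverse of R) *)
  | UM of rat              (* element of the middle copy of Q *)
  | UR of W & option rat.  (* element of R *)

Definition U_lt (W : Type) (wlt : W -> W -> Prop) (x y : Upt W) : Prop :=
  match x, y with
  | UL a p, UL b q => R_lt wlt (b, q) (a, p)   (* reversed *)
  | UL _ _, _ => True
  | UM _, UL _ _ => False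
  | UM a, UM b => (a < b)%R
  | UM _, UR _ _ => True
  | UR _ _, UL _ _ => False
  | UR _ _, UM _ => False
  | UR a p, UR b q => R_lt wlt (a, p) (b, q)
  end.

Definition embeds_into_U {d : Order.disp_t} (L : orderType d)
  (W : Type) (wlt : W -> W -> Prop) : Prop :=
  exists f : L -> Upt W, forall x y : L, (x < y)%O <-> U_lt wlt (f x) (f y).

From HB Require Import structures.
From mathcomp Require Import all_boot all_order all_algebra.
From mathcomp Require Import boolp classical_sets cardinality.
From mathcomp Require Import lra.
Set Implicit Arguments. Unset Strict Implicit. Unset Printing Implicit Defensive.
Import Order.TTheory GRing.Theory Num.Theory.

(* Fix a cofinal f : omega_1 -> L and send x to its block, the least alpha
   with x <= f alpha.  Blocks are intervals of L ordered like omega_1, and each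
   lies below some f alpha, in an initial segment that is countable because L
   has a first element and trivial countable condensation.  Embedding every
   block into Q and sending x to the point (alpha, q_x) of the summand R of U
   gives an order embedding. *)

Local Open Scope classical_set_scope.

Lemma finite_argmax (d : Order.disp_t) (T : orderType d) (a : nat -> T)
    (P : nat -> Prop) (n : nat) :
  (forall i, (i < n)%N -> ~ P i) \/
  exists2 k, (k < n)%N /\ P k & forall i, (i < n)%N -> P i -> (a i <= a k)%O.
Proof.
elim: n => [|n IH]; first by left.
have [Pn|nPn] := pselect (P n).
- right; case: IH => [none|[k [kn Pk] kmax]].
    exists n => // i; rewrite ltnS leq_eqVlt.
    by case/orP=> [/eqP->//|ilt /(none i ilt)].
  case: (leP (a k) (a n)) => akn.
    exists n => // i; rewrite ltnS leq_eqVlt => /orP[/eqP->//|ilt Pi].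
    exact: le_trans (kmax i ilt Pi) akn.
  exists k; first by rewrite ltnW.
  move=> i; rewrite ltnS leq_eqVlt => /orP[/eqP-> _|]; [exact: ltW|exact: kmax].
- case: IH => [none|[k [kn Pk] kmax]]; [left|right].
    by move=> i; rewrite ltnS leq_eqVlt => /orP[/eqP->|/none].
  exists k; first by rewrite ltnW.
  by move=> i; rewrite ltnS leq_eqVlt => /orP[/eqP->|]; [|exact: kmax].
Qed.

Local Open Scope ring_scope.

Lemma finite_interpolation (R : realFieldType) (n : nat) (a : nat -> R)
    (P Q : nat -> Prop) :
  (forall i j, (i < n)%N -> (j < n)%N -> P i -> Q j -> a i < a j) ->
  exists q, forall i, (i < n)%N -> (P i -> a i < q) /\ (Q i -> q < a i).
Proof.
move=> PQ.
have [noP | [k [kn Pk] kmax]] := finite_argmax a P n;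
have [noQ | [l [ln Ql] lmin]] := finite_argmax (fun i => - a i) Q n.
- by exists 0 => i ilt; split=> [/(noP i ilt)|/(noQ i ilt)].
- exists (a l - 1) => i ilt; split=> [/(noP i ilt)//|Qi].
  by have := lmin i ilt Qi; rewrite lerN2; lra.
- exists (a k + 1) => i ilt; split=> [Pi|/(noQ i ilt)//].
  by have := kmax i ilt Pi; lra.
- have akl := PQ k l kn ln Pk Ql.
  exists ((a k + a l) / 2) => i ilt; split=> [Pi|Qi].
    by have := kmax i ilt Pi; lra.
  by have := lmin i ilt Qi; rewrite lerN2; lra.
Qed.

Section GreedyEmbedding.
Variables (R : realFieldType) (d : Order.disp_t) (T : orderType d) (e : nat -> T).

Definition fits_at (n : nat) (s : seq R) (q : R) : Prop :=
  forall i, (i < n)%N ->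
    ((e i < e n)%O -> nth 0 s i < q) /\ ((e n < e i)%O -> q < nth 0 s i).

Fixpoint greedy_prefix (n : nat) : seq R :=
  if n is n'.+1 then
    rcons (greedy_prefix n') (xget 0 (fits_at n' (greedy_prefix n')))
  else [::].

Definition greedy (n : nat) : R := xget 0 (fits_at n (greedy_prefix n)).

Lemma size_greedy_prefix n : size (greedy_prefix n) = n.
Proof. by elim: n => //= n IH; rewrite size_rcons IH. Qed.

Lemma nth_greedy_prefix n i : (i < n)%N -> nth 0 (greedy_prefix n) i = greedy i.
Proof.
elim: n => // n IH; rewrite ltnS leq_eqVlt => /orP[/eqP->|ilt] /=;
by rewrite nth_rcons size_greedy_prefix ?ltnn ?eqxx // ilt IH.
Qed.

Lemma greedy_mono n i j : (i < n)%N -> (j < n)%N ->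
  (e i < e j)%O -> greedy i < greedy j.
Proof.
elim: n i j => // n IH.
have greedy_fits : fits_at n (greedy_prefix n) (greedy n).
  apply: xgetPex.
  have [q qfits] := @finite_interpolation R n greedy
    (fun i => (e i < e n)%O) (fun i => (e n < e i)%O)
    (fun i j ilt jlt ei ej => IH i j ilt jlt (lt_trans ei ej)).
  by exists q => k klt; rewrite nth_greedy_prefix //; apply: qfits.
have fits i : (i < n)%N ->
    ((e i < e n)%O -> greedy i < greedy n) /\ ((e n < e i)%O -> greedy n < greedy i).
  by move=> ilt; have := greedy_fits i ilt; rewrite nth_greedy_prefix.
move=> i j; rewrite ltnS leq_eqVlt => /orP[/eqP->|ilt];
  rewrite ltnS leq_eqVlt => /orP[/eqP->|jlt]; first by rewrite ltxx.
- by move/(fits j jlt).2.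
- by move/(fits i ilt).1.
- exact: IH.
Qed.

End GreedyEmbedding.

Lemma countable_embeds_in_field (R : realFieldType) (d : Order.disp_t)
    (T : orderType d) (S : set T) :
  countable S ->
  exists g : T -> R, forall x y, S x -> S y -> (x < y)%O -> g x < g y.
Proof.
move=> /countable_injP[f finj].
have [[x0 Sx0]|noS] := pselect (exists x, S x); last first.
  by exists (fun=> 0) => x y Sx; case: noS; exists x.
pose e n := xget x0 [set x | S x /\ f x = n].
have ef x : S x -> e (f x) = x.
  move=> Sx; have [Sy fy] : [set y | S y /\ f y = f x] (e (f x)).
    by apply: xgetPex; exists x.
  exact: finj (mem_set Sy) (mem_set Sx) fy.
exists (fun x => greedy R e (f x)) => x y Sx Sy xy.
apply: (@greedy_mono _ _ _ e (maxn (f x) (f y)).+1);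
  by rewrite ?ltnS ?leq_maxl ?leq_maxr ?ef.
Qed.

Local Close Scope ring_scope.

Lemma well_founded_least (W : Type) (wlt : W -> W -> Prop) (P : W -> Prop) :
  well_founded wlt -> (exists a, P a) ->
  exists a, P a /\ forall b, wlt b a -> ~ P b.
Proof.
move=> wf [a Pa]; apply: contrapT => nomin.
elim/(well_founded_ind wf): a Pa => c IH Pc.
by apply: nomin; exists c; split => // b /IH.
Qed.

Lemma countable_initial_segment (d : Order.disp_t) (L : orderType d) (b : L) :
  @has_first_element d L -> @cond_omega_trivial d L ->
  countable [set x : L | (x <= b)%O].
Proof.
move=> [m mfirst] cond; apply: sub_countable (cond m b); apply: subset_card_le.
by move=> x /= xb; rewrite min_l ?max_r ?mfirst.
Qed.

Section Blocks.
Variables (W : Type) (wlt : W -> W -> Prop).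
Hypotheses (wlt_total : forall a b, wlt a b \/ a = b \/ wlt b a)
           (wlt_wf : well_founded wlt).
Variables (d : Order.disp_t) (L : orderType d) (f : W -> L).
Hypothesis f_cofinal : forall x : L, exists a, (x <= f a)%O.

Let block_ex x : exists a, (x <= f a)%O /\ forall b, wlt b a -> ~ (x <= f b)%O.
Proof. exact: well_founded_least. Qed.

Definition block (x : L) : W := proj1_sig (cid (block_ex x)).

Lemma block_le x : (x <= f (block x))%O.
Proof. exact: (proj2_sig (cid (block_ex x))).1. Qed.

Lemma block_least x b : wlt b (block x) -> ~ (x <= f b)%O.
Proof. exact: (proj2_sig (cid (block_ex x))).2. Qed.

Lemma block_mono x y : (x < y)%O -> block x = block y \/ wlt (block x) (block y).
Proof.
move=> xy; case: (wlt_total (block x) (block y)) => [|[|yx]]; [by right|by left|].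
by case: (block_least yx); exact: le_trans (ltW xy) (block_le y).
Qed.

End Blocks.

Lemma lex_embedding_into_R (W : Type) (wlt : W -> W -> Prop)
    (d : Order.disp_t) (L : orderType d) (blk : L -> W) (g : W -> L -> rat) :
  (forall a, ~ wlt a a) -> (forall a b c, wlt a b -> wlt b c -> wlt a c) ->
  (forall x y, (x < y)%O -> blk x = blk y \/ wlt (blk x) (blk y)) ->
  (forall x y, blk x = blk y -> (x < y)%O -> (g (blk x) x < g (blk x) y)%R) ->
  forall x y, (x < y)%O <->
    R_lt wlt (blk x, Some (g (blk x) x)) (blk y, Some (g (blk y) y)).
Proof.
move=> irr trans mono gmono x y; split.
  move=> xy; case: (mono x y xy) => [exy|]; [right|by left].
  by split=> //=; rewrite -exy; apply: gmono.
rewrite /R_lt /=; case: (ltgtP x y) => // [yx|->]; last first.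
  by case=> [/irr|[_]] //; rewrite ltxx.
case: (mono y x yx) => [eyx|wyx] [wxy|[exy gxy]].
- by move: wxy; rewrite eyx => /irr [].
- have := gmono y x eyx yx; rewrite eyx in gxy * => /lt_gtF.
  by rewrite gxy.
- by case: (irr _ (trans _ _ _ wxy wyx)).
- by move: wyx; rewrite exy => /irr [].
Qed.

Theorem proposition3p13 (W : Type) (wlt : W -> W -> Prop)
  (hW : is_omega1 wlt)
  (d : Order.disp_t) (L : orderType d)
  (hfirst : @has_first_element d L)
  (hcond : @cond_omega_trivial d L)
  (hcf : @cf_is_omega1 d L W wlt) :
  embeds_into_U L wlt.
Proof.
have [irr trans total wf _ _] := hW.
have [[f [_ f_cofinal]] _] := hcf.
pose blk := block wf f_cofinal.
have block_countable a : countable [set x | blk x = a].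
  apply: sub_countable (countable_initial_segment (f a) hfirst hcond).
  by apply: subset_card_le => x /= <-; apply: block_le.
have embed a : exists g : L -> rat, forall x y,
    blk x = a -> blk y = a -> (x < y)%O -> (g x < g y)%R.
  exact: countable_embeds_in_field (block_countable a).
pose g a := proj1_sig (cid (embed a)).
exists (fun x => UR (blk x) (Some (g (blk x) x))) => x y /=.
apply: lex_embedding_into_R => //; first exact: block_mono.
by move=> {}x {}y exy; apply: (proj2_sig (cid (embed (blk x)))); rewrite ?exy.
Qed.
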